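(* Let $(S,\sqsubseteq)$ be an ordinary poset. Then $(`S,`\!\sqsubseteq)$ is a quantum cpo if and only if $(S,\sqsubseteq)$ is an $\omega$-cpo (every increasing sequence has a least upper bound). Moreover, the functor $`(-):\mathbf{CPO}\to\mathbf{qCPO}$, sending $(S,\sqsubseteq)$ to $(`S,`\!\sqsubseteq)$ and a Scott continuous map $f$ to $`f$, is well defined and fully faithful.
   Context: A quantum set $\mathcal X$ is a set $\mathrm{At}(\mathcal X)$ of nonzero finite-dimensional Hilbert spaces (atoms). A relation $R$ from $\mathcal X$ to $\mathcal Y$ is a choice of subspaces $R(X,Y)\subseteq L(X,Y)$ for all atoms. Composition: $(S\circ R)(X,Z)=\mathrm{span}\{sr: r\in R(X,Y), s\in S(Y,Z), Y\in\mathrm{At}(\mathcal Y)\}$; identity $I_{\mathcal X}(X,X)=\mathbb C 1_X$ and $0$ off the diagonal; adjoint $R^\dagger(Y,X)=\{r^\dagger: r\in R(X,Y)\}$; $R\le S$ entrywise inclusion; $\bigwedge$ entrywise intersection. A function $F:\mathcal X\to\mathcal Y$ is a relation with $F\circ F^\dagger\le I_{\mathcal Y}$ and $F^\dagger\circ F\ge I_{\mathcal X}$. A quantum poset is $(\mathcal X,R)$ with $I_{\mathcal X}\le R$, $R\circ R\le R$, $R\wedge R^\dagger\le I_{\mathcal X}$. For functions $F,G:\mathcal W\to\mathcal X$, $F\sqsubseteq G$ means $G\le R\circ F$. For an increasing sequence $K_1\sqsubseteq K_2\sqsubseteq\cdots:\mathcal W\to\mathcal X$, write $K_n\nearrow K_\infty$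 if $K_\infty:\mathcal W\to\mathcal X$ is a function with $R\circ K_\infty=\bigwedge_{n}R\circ K_n$. $\mathbf H_d$ denotes the quantum set whose single atom is $H_d=\mathbb C^d$. A quantum poset $(\mathcal X,R)$ is a quantum cpo if for every $d\ge 1$ and every increasing sequence $K_1\sqsubseteq K_2\sqsubseteq\cdots:\mathbf H_d\to\mathcal X$ there is $K_\infty:\mathbf H_d\to\mathcal X$ with $K_n\nearrow K_\infty$. A function $F:\mathcal X\to\mathcal Y$ between quantum cpos is Scott continuous if for every $d\ge1$ and functions $K_i:\mathbf H_d\to\mathcal X$ ($i\in\mathbb N\cup\{\infty\}$), $K_n\nearrow K_\infty$ implies $F\circ K_n\nearrow F\circ K_\infty$; $\mathbf{qCPO}$ is the category of quantum cpos and Scott continuous functions. $\mathbf{CPO}$ is the category of $\omega$-cpos and Scott continuous maps. For an ordinary set $S$, $`S$ is the quantum set with one atom $\mathbb C_s$ ($\cong\mathbb C$) per $s\in S$; an ordinary relation $r\subseteq S\times T$ (e.g. an order or the graph of a function) gives $`r$ with $`r(\mathbb C_s,\mathbb C_t)=L(\mathbb C_s,\mathbb C_t)$ if $(s,t)\in r$ and $0$ otherwise. *)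

(* Quantum sets / quantum posets / quantum cpos
   (Kornell-Lindenhovius-Mislove style), over a field C of "complex numbers"
   (an arbitrary numClosedFieldType, which includes the complex numbers). *)
From HB Require Import structures.
From mathcomp Require Import all_boot all_order all_algebra.
Unset Printing Implicit Defensive.
Import GRing.Theory Num.Theory.
Local Open Scope ring_scope.


(* A quantum set: an index set of atoms, each atom being the Hilbert space
   C^(qdim i), which is nonzero. *)
Record qset (C : numClosedFieldType) := QSet {
  qatom : Type;
  qdim : qatom -> nat;
  qdim_gt0 : forall i, (0 < qdim i)%N
}.
Arguments qatom {C} _.
Arguments qdim {C} _ _.
Arguments qdim_gt0 {C} _ _.

(* L(X_i, Y_j) is represented by matrices acting on column vectors. *)
Definition qrel {C : numClosedFieldType} (X Y : qset C) :=
  forall (i : qatom X) (j : qatom Y), 'M[C]_(qdim Y j, qdim X i) -> Prop.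

Definition is_subspace {C : numClosedFieldType} {m n} (V : 'M[C]_(m, n) -> Prop) :=
  V 0 /\ (forall a u v, V u -> V v -> V (a *: u + v)).

Definition is_qrel {C : numClosedFieldType} {X Y : qset C} (R : qrel X Y) := forall i j, is_subspace (R i j).

Definition qle {C : numClosedFieldType} {X Y : qset C} (R S : qrel X Y) := forall i j m, R i j m -> S i j m.
Definition qeq {C : numClosedFieldType} {X Y : qset C} (R S : qrel X Y) := qle R S /\ qle S R.

Definition qcomp {C : numClosedFieldType} {X Y Z : qset C} (S : qrel Y Z) (R : qrel X Y) : qrel X Z :=
  fun i k m => exists (n : nat) (js : 'I_n -> qatom Y)
    (rs : forall t, 'M[C]_(qdim Y (js t), qdim X i))
    (ss : forall t, 'M[C]_(qdim Z k, qdim Y (js t))),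
    (forall t, R i (js t) (rs t)) /\ (forall t, S (js t) k (ss t)) /\
    m = \sum_(t < n) (ss t *m rs t).

Definition qid {C : numClosedFieldType} (X : qset C) : qrel X X :=
  fun i j m => m = 0 \/
    exists (e : i = j) (c : C),
      m = eq_rect i (fun j' => 'M[C]_(qdim X j', qdim X i)) (c%:M) j e.

Definition hadj {C : numClosedFieldType} {m n} (M : 'M[C]_(m, n)) : 'M[C]_(n, m) := (map_mx Num.conj M)^T.

Definition qadj {C : numClosedFieldType} {X Y : qset C} (R : qrel X Y) : qrel Y X := fun j i m => R i j (hadj m).

Definition qmeet {C : numClosedFieldType} {X Y : qset C} (Rs : nat -> qrel X Y) : qrel X Y :=
  fun i j m => forall n, Rs n i j m.

Definition qmeet2 {C : numClosedFieldType} {X Y : qset C} (R S : qrel X Y) : qrel X Y :=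
  fun i j m => R i j m /\ S i j m.

Definition qfun {C : numClosedFieldType} {X Y : qset C} (F : qrel X Y) :=
  is_qrel F /\ qle (qcomp F (qadj F)) (qid Y) /\ qle (qid X) (qcomp (qadj F) F).

Definition qposet {C : numClosedFieldType} {X : qset C} (R : qrel X X) :=
  is_qrel R /\ qle (qid X) R /\ qle (qcomp R R) R /\ qle (qmeet2 R (qadj R)) (qid X).

Definition qsqle {C : numClosedFieldType} {W X : qset C} (R : qrel X X) (F G : qrel W X) := qle G (qcomp R F).

Definition qincreasing {C : numClosedFieldType} {W X : qset C} (R : qrel X X) (K : nat -> qrel W X) :=
  (forall n, qfun (K n)) /\ (forall n, qsqle R (K n) (K n.+1)).

Definition qsup {C : numClosedFieldType} {W X : qset C} (R : qrel X X) (K : nat -> qrel W X) (Kinf : qrel W X) :=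
  qincreasing R K /\ qfun Kinf /\
  qeq (qcomp R Kinf) (qmeet (fun n => qcomp R (K n))).

Definition qH (C : numClosedFieldType) (d : nat) : qset C :=
  @QSet C unit (fun _ => d.-1.+1) (fun _ => isT).

Definition qcpo {C : numClosedFieldType} {X : qset C} (R : qrel X X) :=
  qposet R /\
  forall d : nat, (0 < d)%N ->
    forall K : nat -> qrel (qH C d) X, qincreasing R K ->
      exists Kinf, qsup R K Kinf.

Definition qscott {C : numClosedFieldType} {X Y : qset C} (RX : qrel X X) (RY : qrel Y Y) (F : qrel X Y) :=
  qfun F /\
  forall d : nat, (0 < d)%N ->
    forall (K : nat -> qrel (qH C d) X) (Kinf : qrel (qH C d) X),
      qsup RX K Kinf -> qsup RY (fun n => qcomp F (K n)) (qcomp F Kinf).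

Definition qclassical (C : numClosedFieldType) (S : Type) : qset C := @QSet C S (fun _ => 1%N) (fun _ => isT).

Definition qcrel (C : numClosedFieldType) {S T : Type} (r : S -> T -> Prop) : qrel (qclassical C S) (qclassical C T) :=
  fun s t m => r s t \/ m = 0.

Definition graph {S T : Type} (f : S -> T) : S -> T -> Prop := fun s t => f s = t.

Definition is_poset {S : Type} (le : S -> S -> Prop) :=
  (forall x, le x x) /\ (forall x y z, le x y -> le y z -> le x z) /\
  (forall x y, le x y -> le y x -> x = y).

Definition increasing_seq {S : Type} (le : S -> S -> Prop) (s : nat -> S) :=
  forall n, le (s n) (s n.+1).

Definition is_lub {S : Type} (le : S -> S -> Prop) (s : nat -> S) (x : S) :=
  (forall n, le (s n) x) /\ (forall y, (forall n, le (s n) y) -> le x y).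

Definition omega_cpo {S : Type} (le : S -> S -> Prop) :=
  is_poset le /\
  forall s, increasing_seq le s -> exists x, is_lub le s x.

Definition scott_continuous {S T : Type} (leS : S -> S -> Prop) (leT : T -> T -> Prop)
  (f : S -> T) :=
  (forall x y, leS x y -> leT (f x) (f y)) /\
  forall s x, increasing_seq leS s -> is_lub leS s x -> is_lub leT (fun n => f (s n)) (f x).

From mathcomp Require Import all_boot all_order all_algebra.
From mathcomp Require Import boolp.
Import GRing.Theory Num.Theory.
Local Open Scope ring_scope.
Set Implicit Arguments. Unset Strict Implicit.

(* Atoms of [`S] are one-dimensional, so a function [K : H_d -> `S] amounts
   to an orthogonal decomposition of C^d into subspaces [K s], [s : S]
   ([qfunE]), and composing with [`<=] replaces each [K s] by the span of the
   [K s'] with [s' <= s].  An increasing sequence of functions is thus a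
   sequence of decompositions [K n] whose fibres refine along [<=].

   The core of the file ([Limit], [decomposition_sup]) builds the supremum
   of such a sequence when [S] is an omega-cpo: the projections onto the
   spans below each [t] decrease and stabilize, and the limit fibre over [x]
   is the part of the limit below [x] orthogonal to the limits below every
   [y] not above [x].  That these fibres still span C^d is proved by
   splitting projections by rank, the indecomposable pieces being located
   by the least upper bound of a chain of supports ([support_lub]).

   The theorem then follows: omega-cpos give quantum cpos; conversely,
   suprema of points [H_1 -> `S] are points, giving least upper bounds.
   Graphs of maps are exactly the functions [`S -> `T]; graphs of Scott
   continuous maps are Scott continuous because spans over Scott-closed sets
   commute with suprema; and testing on points recovers Scott continuity of
   the underlying map of any Scott continuous function. *)

Section Preliminaries.
Variable C : numClosedFieldType.

Lemma hadjM m n p (A : 'M[C]_(m, n)) (B : 'M[C]_(n, p)) : hadj (A *m B) = hadj B *m hadj A.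
Proof. by rewrite /hadj map_mxM trmx_mul. Qed.

Lemma hadjK m n (A : 'M[C]_(m, n)) : hadj (hadj A) = A.
Proof. by rewrite /hadj map_trmx trmxK; apply/matrixP=> i j; rewrite !mxE conjCK. Qed.

Lemma hadj1 n : hadj (1%:M : 'M[C]_n) = 1%:M.
Proof. by rewrite /hadj map_mx1 trmx1. Qed.

Lemma hadj0 m n : hadj (0 : 'M[C]_(m, n)) = 0.
Proof. by apply/matrixP=> i j; rewrite !mxE conjC0. Qed.

Lemma hadjD m n (A B : 'M[C]_(m, n)) : hadj (A + B) = hadj A + hadj B.
Proof. by rewrite /hadj map_mxD linearD. Qed.

Lemma hadjB m n (A B : 'M[C]_(m, n)) : hadj (A - B) = hadj A - hadj B.
Proof. by apply/matrixP=> i j; rewrite !mxE rmorphB. Qed.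

Lemma hadj_sum m n (I : Type) (r : seq I) (P : pred I) (F : I -> 'M[C]_(m, n)) :
  hadj (\sum_(i <- r | P i) F i) = \sum_(i <- r | P i) hadj (F i).
Proof. by elim/big_rec2: _ => [|i x y _ <-]; rewrite ?hadj0 ?hadjD. Qed.

Lemma hadj_eq0 m n (A : 'M[C]_(m, n)) : hadj A = 0 -> A = 0.
Proof. by move=> h; rewrite -[A]hadjK h hadj0. Qed.

Lemma orthoC m n p (u : 'M[C]_(m, n)) (v : 'M[C]_(p, n)) :
  v *m hadj u = 0 -> u *m hadj v = 0.
Proof. by move=> h; rewrite -[u *m _]hadjK hadjM hadjK h hadj0. Qed.

Lemma rv_norm0 k (u : 'rV[C]_k) : u *m hadj u = 0 -> u = 0.
Proof.
move=> /matrixP /(_ 0 0); rewrite !mxE => h.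
have h2 : forall j, true -> u 0 j * (u 0 j)^* = 0.
  apply: psumr_eq0P => [j _|]; first exact: mul_conjC_ge0.
  by rewrite -[in RHS]h; apply: eq_bigr => j _; rewrite !mxE.
apply/matrixP => i j; rewrite (ord1 i) mxE; apply/eqP; rewrite -mul_conjC_eq0; apply/eqP.
exact: h2.
Qed.

Lemma hadj_mul_rows k (A : 'M[C]_k) :
  hadj A *m A = \sum_(i < k) hadj (row i A) *m row i A.
Proof.
apply/matrixP=> x y; rewrite !mxE summxE; apply: eq_bigr => i _.
by rewrite !mxE big_ord1 !mxE.
Qed.

Lemma mx11_mul n (c : 'M[C]_1) (v : 'M[C]_(1, n)) : c *m v = c 0 0 *: v.
Proof. by rewrite {1}[c]mx11_scalar mul_scalar_mx. Qed.

(* [finsum P x]: [x] is a finite sum of matrices satisfying [P]; this is the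
   span of [P] as soon as [P] is closed under scaling. *)
Definition finsum m n (P : 'M[C]_(m, n) -> Prop) (x : 'M[C]_(m, n)) : Prop :=
  exists N (f : 'I_N -> 'M[C]_(m, n)), (forall i, P (f i)) /\ x = \sum_i f i.

Section FinSum.
Variables (m n : nat).
Implicit Types (P Q : 'M[C]_(m, n) -> Prop) (x y : 'M[C]_(m, n)).

Lemma finsum0 P : finsum P 0.
Proof. by exists 0%N, (fun _ => 0); split; [case|rewrite big_ord0]. Qed.

Lemma finsum1 P x : P x -> finsum P x.
Proof. by move=> h; exists 1%N, (fun _ => x); split=> //; rewrite big_ord1. Qed.

Lemma finsumD P x y : finsum P x -> finsum P y -> finsum P (x + y).
Proof.
move=> [N1 [f1 [h1 ->]]] [N2 [f2 [h2 ->]]].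
exists (N1 + N2)%N, (fun i => match split i with inl a => f1 a | inr b => f2 b end).
split=> [i|]; first by case: (split i).
rewrite big_split_ord /=; congr (_ + _); apply: eq_bigr => i _.
  by rewrite (unsplitK (inl i : _ + 'I_N2)).
by rewrite (unsplitK (inr i : 'I_N1 + _)).
Qed.

Lemma finsum_big P (I : Type) (r : seq I) (R : pred I) F :
  (forall i, R i -> finsum P (F i)) -> finsum P (\sum_(i <- r | R i) F i).
Proof.
move=> h; elim/big_rec: _ => [|i x Ri hx]; first exact: finsum0.
exact: finsumD (h i Ri) hx.
Qed.

Lemma finsum_ind P Q x :
  Q 0 -> (forall u v, Q u -> Q v -> Q (u + v)) -> (forall u, P u -> Q u) ->
  finsum P x -> Q x.
Proof.
move=> h0 hD hPQ [N [f [hf ->]]]; elim/big_rec: _ => // i y _ hy.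
by apply: hD => //; apply: hPQ.
Qed.

Lemma finsum_eq0 P x : (forall u, P u -> u = 0) -> finsum P x -> x = 0.
Proof.
move=> h; apply: (finsum_ind (Q := fun u => u = 0)) => // u v -> ->.
by rewrite addr0.
Qed.

Lemma finsum_mono P Q x : (forall y, P y -> Q y) -> finsum P x -> finsum Q x.
Proof. by move=> h [N [f [hf ->]]]; exists N, f; split=> // i; apply: h. Qed.

Lemma finsum_flat P x : finsum (finsum P) x -> finsum P x.
Proof. by move=> [N [f [hf ->]]]; apply: finsum_big => i _; apply: hf. Qed.

Lemma finsum_drop0 P x : finsum (fun u => u = 0 \/ P u) x -> finsum P x.
Proof.
move=> h; apply: finsum_flat; apply: finsum_mono h => y [->|].
  exact: finsum0.
exact: finsum1.
Qed.

Lemma subspaceZ P c x : is_subspace P -> P x -> P (c *: x).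
Proof. by move=> [h0 hD] hx; have := hD c x 0 hx h0; rewrite addr0. Qed.

Lemma subspace_finsum P x : is_subspace P -> finsum P x -> P x.
Proof.
move=> [h0 hD]; apply: finsum_ind => // u v hu hv.
by have := hD 1 u v hu hv; rewrite scale1r.
Qed.

Lemma finsum_subspace P : (forall c x, P x -> P (c *: x)) -> is_subspace (finsum P).
Proof.
move=> hZ; split; first exact: finsum0.
move=> c u v [N [f [hf ->]]] hv; apply: finsumD hv.
by rewrite scaler_sumr; apply: finsum_big => i _; apply: finsum1; apply: hZ.
Qed.

End FinSum.

Lemma qcompE (X Y Z : qset C) (S : qrel Y Z) (R : qrel X Y) i k m :
  qcomp S R i k m <-> finsum (fun x => exists j r s, R i j r /\ S j k s /\ x = s *m r) m.
Proof.
split.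
  move=> [N [js [rs [ss [hR [hS ->]]]]]]; apply: finsum_big => t _; apply: finsum1.
  by exists (js t), (rs t), (ss t).
move=> [N [f [hf ->]]].
pose g t := cid (hf t); pose g2 t := cid (proj2_sig (g t)).
pose g3 t := cid (proj2_sig (g2 t)).
exists N, (fun t => proj1_sig (g t)), (fun t => proj1_sig (g2 t)), (fun t => proj1_sig (g3 t)).
split; [|split].
- by move=> t; case: (proj2_sig (g3 t)).
- by move=> t; case: (proj2_sig (g3 t)) => _ [].
- by apply: eq_bigr => t _; case: (proj2_sig (g3 t)) => _ [].
Qed.

Lemma qcomp_congr (X Y Z : qset C) (S S' : qrel Y Z) (R R' : qrel X Y) :
  (forall j k m, S j k m <-> S' j k m) -> (forall i j m, R i j m <-> R' i j m) ->
  forall i k m, qcomp S R i k m <-> qcomp S' R' i k m.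
Proof.
move=> eS eR i k m; rewrite !qcompE.
split; apply: finsum_mono => x [j [r [s [h1 [h2 ->]]]]]; exists j, r, s.
  by split; [apply/eR|split; [apply/eS|]].
by split; [apply/eR|split; [apply/eS|]].
Qed.

End Preliminaries.

(* A function [K : H_d -> `S] is determined by the family of subspaces
   [K tt s] of row vectors of C^d, indexed by [s : S].  We call such a family
   [V] a decomposition of C^d when its fibres are subspaces, pairwise
   orthogonal, and the identity is a sum of rank-one operators [a^* b] with
   [a], [b] in a common fibre; [qfunE] shows these are exactly the functions. *)
Section Decomposition.
Variable C : numClosedFieldType.
Variables (S : Type) (k : nat).
Implicit Types (V : S -> 'rV[C]_k -> Prop) (D : S -> Prop).

Definition span_on V D : 'rV[C]_k -> Prop := finsum (fun u => exists s, D s /\ V s u).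

Definition fibre_subspaces V : Prop := forall s, is_subspace (V s).

Definition orthogonal_fibres V : Prop :=
  forall s s' a b, s <> s' -> V s a -> V s' b -> b *m hadj a = 0.

Definition resolves_identity V : Prop :=
  finsum (fun X => exists s a b, V s a /\ V s b /\ X = hadj a *m b) 1%:M.

Definition decomposition V : Prop :=
  [/\ fibre_subspaces V, orthogonal_fibres V & resolves_identity V].

Lemma span_on_mono V D D' v : (forall s, D s -> D' s) -> span_on V D v -> span_on V D' v.
Proof. by move=> h; apply: finsum_mono => u [s [hs hu]]; exists s; split=> //; apply: h. Qed.

Lemma span_on_ext V D p (u : 'rV[C]_k) (P Q : 'M[C]_(k, p)) :
  span_on V D u -> (forall s x, D s -> V s x -> x *m P = x *m Q) -> u *m P = u *m Q.
Proof.
move=> hu h; apply: (finsum_ind (Q := fun x : 'rV[C]_k => x *m P = x *m Q)) hu.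
- by rewrite !mul0mx.
- by move=> x y /= hx hy; rewrite !mulmxDl hx hy.
- by move=> x [s [hD hK]]; apply: h hK.
Qed.

Lemma resolves_identityP V : resolves_identity V ->
  exists n (js : 'I_n -> S) (a b : 'I_n -> 'rV[C]_k),
    [/\ forall i, V (js i) (a i), forall i, V (js i) (b i) &
        \sum_i hadj (a i) *m b i = 1%:M].
Proof.
move=> [N [f [hf ->]]].
pose g t := cid (hf t); pose g2 t := cid (proj2_sig (g t)).
pose g3 t := cid (proj2_sig (g2 t)).
exists N, (fun t => proj1_sig (g t)), (fun t => proj1_sig (g2 t)), (fun t => proj1_sig (g3 t)).
split.
- by move=> t; case: (proj2_sig (g3 t)).
- by move=> t; case: (proj2_sig (g3 t)) => _ [].
- by apply: eq_bigr => t _; case: (proj2_sig (g3 t)) => _ [_ e]; exact: esym e.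
Qed.

End Decomposition.

Section FunctionsFromHd.
Variable C : numClosedFieldType.

Lemma qcomp_crel (S T : Type) (r : S -> T -> Prop) d
    (K : qrel (qH C d) (qclassical C S)) (t : T) (v : 'rV[C]_(d.-1.+1)) :
  is_qrel K -> (qcomp (qcrel C r) K tt t v <-> span_on (K tt) (fun s => r s t) v).
Proof.
move=> Ksub; rewrite qcompE; split.
  move=> h; apply: finsum_drop0; apply: finsum_mono h => x [j [rr [ss [hK [hr ->]]]]].
  case: hr => [hr|->]; last by left; rewrite mul0mx.
  by right; exists j; split=> //; rewrite mx11_mul; apply: subspaceZ => //; exact: Ksub.
apply: finsum_mono => x [s [hD hK]]; exists s, x, 1%:M; split=> //; split; first by left.
by rewrite mul1mx.
Qed.

Lemma qrel_fibres d (S : Type) (K : qrel (qH C d) (qclassical C S)) :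
  is_qrel K <-> fibre_subspaces (K tt).
Proof. by split=> [h s|h [] s]; apply: h. Qed.

Lemma qfunE d (S : Type) (K : qrel (qH C d) (qclassical C S)) :
  qfun K <-> decomposition (K tt).
Proof.
split.
  move=> [Ksub [h1 h2]]; split; first exact/qrel_fibres.
    move=> s s' a b ss' ha hb.
    have : qcomp K (qadj K) s s' (b *m hadj a).
      apply/qcompE; apply: finsum1; exists tt, (hadj a), b; split=> //.
      by rewrite /qadj hadjK.
    by move=> /h1 [h|[e _]]; [exact: h|case: ss'].
  have : qid (qH C d) tt tt 1%:M by right; exists erefl, 1.
  move=> /h2 /qcompE; apply: finsum_mono => x [j [rr [ss [hr [hs ->]]]]].
  by exists j, (hadj ss), rr; split=> //; split=> //; rewrite hadjK.
move=> [Ksub horth hfr]; split; first exact/qrel_fibres.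
split.
  move=> s s' m /qcompE hm.
  have [es|ns] := pselect (s = s').
    by subst s'; right; exists erefl, (m 0 0); exact: mx11_scalar.
  left; apply: finsum_eq0 hm => x [[] [rr [ss [hr [hs ->]]]]].
  by rewrite -[rr]hadjK; apply: (horth s s').
case=> [] [] m [->|[e [c ->]]]; first by apply/qcompE; exact: finsum0.
rewrite (eq_axiomK e) /=; apply/qcompE.
rewrite -scalemx1; move: hfr => [N [f [hf ->]]]; rewrite scaler_sumr.
apply: finsum_big => i _; have [s [a [b [ha [hb ->]]]]] := hf i; apply: finsum1.
exists s, (c *: b), (hadj a); split; first exact: subspaceZ.
by rewrite /qadj hadjK scalemxAr.
Qed.

End FunctionsFromHd.

(* The orthogonal projection onto the span of the fibres over [D], written
   with the help of an explicit resolution of the identity. *)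
Section Projections.
Variable C : numClosedFieldType.
Variables (S : Type) (k : nat) (V : S -> 'rV[C]_k -> Prop).
Hypothesis Vsub : fibre_subspaces V.
Hypothesis Vorth : orthogonal_fibres V.
Variables (n : nat) (js : 'I_n -> S) (a b : 'I_n -> 'rV[C]_k).
Hypotheses (Va : forall i, V (js i) (a i)) (Vb : forall i, V (js i) (b i)).
Hypothesis resolution : \sum_i hadj (a i) *m b i = 1%:M.
Implicit Types (D : S -> Prop).

Definition proj_on D : 'M[C]_k := \sum_(i | `[< D (js i) >]) hadj (a i) *m b i.

Lemma proj_on_ext D D' : (forall s, D s <-> D' s) -> proj_on D = proj_on D'.
Proof. by move=> h; apply: eq_bigl => i; apply: asbool_equiv_eq. Qed.

Lemma proj_on_all : proj_on (fun _ => True) = 1%:M.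
Proof. by rewrite -resolution; apply: eq_bigl => i; rewrite asboolT. Qed.

Lemma proj_on_none : proj_on (fun _ => False) = 0.
Proof. by rewrite /proj_on big_pred0 // => i; rewrite asboolF. Qed.

Lemma fibre_proj_on s (v : 'rV[C]_k) D : V s v ->
  v *m proj_on D = if `[< D s >] then v else 0.
Proof.
move=> hv.
have ortho i : js i <> s -> v *m hadj (a i) = 0 by move=> hi; apply: Vorth (Va i) hv.
have ev : v = \sum_i (v *m hadj (a i)) *m b i.
  by rewrite -{1}[v]mulmx1 -resolution mulmx_sumr; apply: eq_bigr => i _; rewrite mulmxA.
rewrite /proj_on mulmx_sumr big_mkcond /=.
transitivity (\sum_i (if `[< D s >] then (v *m hadj (a i)) *m b i else 0)).
  apply: eq_bigr => i _; have [e|hi] := pselect (js i = s).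
    by rewrite e; case: `[< D s >] => //; rewrite mulmxA.
  by rewrite mulmxA ortho // mul0mx !if_same.
by case: ifP => _; [rewrite -ev|rewrite big1].
Qed.

Lemma proj_onM D D' : proj_on D *m proj_on D' = proj_on (fun s => D s /\ D' s).
Proof.
rewrite /proj_on mulmx_suml [RHS]big_mkcond [LHS]big_mkcond /=.
by apply: eq_bigr => i _; rewrite -mulmxA (fibre_proj_on _ (Vb i)) asbool_and;
  case: `[< D (js i) >]; case: `[< D' (js i) >]; rewrite ?mulmx0.
Qed.

Lemma proj_on_idem D : proj_on D *m proj_on D = proj_on D.
Proof. by rewrite proj_onM; apply: proj_on_ext => s; split=> [[]|]. Qed.

Lemma proj_on_hermitian D : hadj (proj_on D) = proj_on D.
Proof.
have e1 : hadj (proj_on D) = hadj (proj_on D) *m proj_on D.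
  rewrite /proj_on hadj_sum mulmx_suml; apply: eq_bigr => i hi.
  by rewrite hadjM hadjK -mulmxA (fibre_proj_on _ (Va i)) hi.
have e2 : proj_on D = hadj (proj_on D) *m proj_on D.
  by rewrite -{1}[proj_on D]hadjK e1 hadjM hadjK -mulmxA proj_on_idem.
by rewrite {1}e1 -e2.
Qed.

Lemma proj_on_compl D : proj_on D + proj_on (fun s => ~ D s) = 1%:M.
Proof.
rewrite -proj_on_all /proj_on [in RHS](bigID (fun i => `[< D (js i) >])) /=.
by congr (_ + _); apply: eq_bigl => i; rewrite (asboolT I) /= ?asbool_neg.
Qed.

Lemma proj_on_pointwise0 D (v : 'rV[C]_k) :
  (forall s, D s -> v *m proj_on (fun s' => s' = s) = 0) -> v *m proj_on D = 0.
Proof.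
move=> h; rewrite /proj_on mulmx_sumr big1 // => i /asboolP hi.
have -> : a i = a i *m proj_on (fun s' => s' = js i) by rewrite (fibre_proj_on _ (Va i)) asboolT.
by rewrite hadjM proj_on_hermitian !mulmxA h // !mul0mx.
Qed.

Lemma proj_on_range D (v : 'rV[C]_k) : v *m proj_on D = v <-> span_on V D v.
Proof.
split.
  move=> <-; rewrite /proj_on mulmx_sumr; apply: finsum_big => i /asboolP hi.
  apply: finsum1; exists (js i); split=> //.
  by rewrite mulmxA mx11_mul; apply: subspaceZ.
move=> hv; rewrite -[RHS]mulmx1; apply: (span_on_ext (Q := 1%:M) hv) => s x hD hK.
by rewrite mulmx1 (fibre_proj_on _ hK) asboolT.
Qed.

Lemma proj_on_disjoint D D' (v : 'rV[C]_k) : v *m proj_on D = v ->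
  (forall s, D s -> D' s -> False) -> v *m proj_on D' = 0.
Proof.
move=> hv hDD; rewrite -hv -mulmxA proj_onM (@proj_on_ext _ (fun _ => False)) ?proj_on_none ?mulmx0 //.
by move=> s; split=> // -[] /hDD h /h.
Qed.

End Projections.

Lemma nonincreasing_stabilizes (r : nat -> nat) : (forall n, r n.+1 <= r n)%N ->
  exists N, forall n, (N <= n)%N -> r n = r N.
Proof.
move=> hr; have mono m n : (m <= n)%N -> (r n <= r m)%N.
  by move=> /subnK <-; elim: (n - m)%N => //= j IH; apply: leq_trans (hr _) IH.
have hval : exists v, `[< exists n, r n = v >] by exists (r 0%N); apply/asboolP; exists 0%N.
case: (ex_minnP hval) => v /asboolP [N eN] vmin.
exists N => n hn; apply/eqP; rewrite eqn_leq mono //= eN vmin //.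
by apply/asboolP; exists n.
Qed.

Section ChainChoice.
Variables (T : Type) (Q : nat -> T -> Prop) (R : T -> T -> Prop).
Hypothesis Q0 : exists s, Q 0%N s.
Hypothesis Qnext : forall n s, Q n s -> exists t, R s t /\ Q n.+1 t.

Fixpoint chain_seq n : {s | Q n s} :=
  match n return {s | Q n s} with
  | 0%N => cid Q0
  | m.+1 => let y := cid (Qnext (proj2_sig (chain_seq m))) in
            exist _ (proj1_sig y) (proj2 (proj2_sig y))
  end.

Lemma chain_choice : exists c : nat -> T, (forall n, Q n (c n)) /\ (forall n, R (c n) (c n.+1)).
Proof.
exists (fun n => proj1_sig (chain_seq n)); split=> n; first exact: proj2_sig.
exact: (proj1 (proj2_sig (cid (Qnext (proj2_sig (chain_seq n)))))).
Qed.

End ChainChoice.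

Lemma rank_cut (F : fieldType) k (E Q : 'M[F]_k) : E *m E = E -> Q *m Q = Q -> comm_mx E Q ->
  E *m Q <> E -> (\rank (E *m Q) < \rank E)%N.
Proof.
move=> hE hQ hc hne.
have sub : (E *m Q <= E)%MS by rewrite hc submxMl.
have [le1 eq1] := mxrank_leqif_sup sub.
rewrite ltn_neqAle le1 andbT eq1; apply/negP => /submxP [X hX].
by apply: hne; rewrite {1}hX -mulmxA -mulmxA hQ -hX.
Qed.

(* Writing [P_n D] for the projection onto the span of the
   fibres of [K n] over [D], for a down-closed [D] the ranges of [P_n D]
   decrease, hence stabilize to a projection [Plim D].  The limit
   decomposition is [Klim x = A_x ⊖ (span of the A_y with ~ x <= y)], where
   [A_y] is the range of [Plim (<= y)]; the hard part is that its fibres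
   still span everything, which uses the least upper bounds of [S]. *)
Section Limit.
Variable C : numClosedFieldType.
Variables (S : Type) (le : S -> S -> Prop).
Hypothesis le_poset : is_poset le.
Hypothesis le_lub : forall s, increasing_seq le s -> exists x, is_lub le s x.
Variable k : nat.
Variable K : nat -> S -> 'rV[C]_k -> Prop.
Hypothesis Ksub : forall n, fibre_subspaces (K n).
Hypothesis Korth : forall n, orthogonal_fibres (K n).
Variables (fn : nat -> nat) (fjs : forall n, 'I_(fn n) -> S)
  (fa fb : forall n, 'I_(fn n) -> 'rV[C]_k).
Hypotheses (Ka : forall n i, K n (@fjs n i) (@fa n i))
  (Kb : forall n i, K n (@fjs n i) (@fb n i)).
Hypothesis Kres : forall n, \sum_i hadj (@fa n i) *m (@fb n i) = 1%:M.
Hypothesis Kinc : forall n t v, K n.+1 t v -> span_on (K n) (fun s => le s t) v.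
Implicit Types (D : S -> Prop) (x y z : S).

Let le_refl : forall x, le x x. Proof. by case: le_poset. Qed.
Let le_trans : forall x y z, le x y -> le y z -> le x z.
Proof. by case: le_poset => _ []. Qed.
Let le_anti : forall x y, le x y -> le y x -> x = y.
Proof. by case: le_poset => _ []. Qed.

Definition P_ n D : 'M[C]_k := proj_on (@fjs n) (@fa n) (@fb n) D.

Lemma P_ext n D D' : (forall s, D s <-> D' s) -> P_ n D = P_ n D'.
Proof. exact: proj_on_ext. Qed.
Lemma P_all n : P_ n (fun _ => True) = 1%:M.
Proof. exact: proj_on_all. Qed.
Lemma P_M n D D' : P_ n D *m P_ n D' = P_ n (fun s => D s /\ D' s).
Proof. exact: (proj_onM (@Korth n) (@Ka n) (@Kb n) (@Kres n)). Qed.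
Lemma P_idem n D : P_ n D *m P_ n D = P_ n D.
Proof. exact: (proj_on_idem (@Korth n) (@Ka n) (@Kb n) (@Kres n)). Qed.
Lemma P_hermitian n D : hadj (P_ n D) = P_ n D.
Proof. exact: (proj_on_hermitian (@Korth n) (@Ka n) (@Kb n) (@Kres n)). Qed.
Lemma P_compl n D : P_ n D + P_ n (fun s => ~ D s) = 1%:M.
Proof. exact: proj_on_compl. Qed.
Lemma P_pointwise0 n D (v : 'rV[C]_k) :
  (forall s, D s -> v *m P_ n (fun s' => s' = s) = 0) -> v *m P_ n D = 0.
Proof. exact: (proj_on_pointwise0 (@Korth n) (@Ka n) (@Kb n) (@Kres n)). Qed.
Lemma P_range n D (v : 'rV[C]_k) : v *m P_ n D = v <-> span_on (K n) D v.
Proof. exact: (proj_on_range (@Ksub n) (@Korth n) (@Ka n) (@Kb n) (@Kres n)). Qed.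
Lemma P_disjoint n D D' (v : 'rV[C]_k) : v *m P_ n D = v ->
  (forall s, D s -> D' s -> False) -> v *m P_ n D' = 0.
Proof. exact: (proj_on_disjoint (@Korth n) (@Ka n) (@Kb n) (@Kres n)). Qed.

Definition down_closed D : Prop := forall x y, le x y -> D y -> D x.

Lemma down_closed_le y : down_closed (fun s => le s y).
Proof. by move=> x z hxz hz; apply: le_trans hxz hz. Qed.

Definition scott_closed D : Prop := down_closed D /\
  forall s x, increasing_seq le s -> is_lub le s x -> (forall n, D (s n)) -> D x.

Lemma scott_closed_all : scott_closed (fun _ => True).
Proof. by []. Qed.

Lemma scott_closed_le y : scott_closed (fun s => le s y).
Proof. by split=> [|s x _ [_ hx] h]; [exact: down_closed_le|apply: hx]. Qed.

Lemma P_succ D n : down_closed D -> P_ n.+1 D = P_ n.+1 D *m P_ n D.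
Proof.
move=> Dd; apply/row_matrixP => i; rewrite row_mul.
set v := row i (P_ n.+1 D).
have hv : span_on (K n.+1) D v by apply/P_range; rewrite /v -row_mul P_idem.
apply: esym; rewrite -[in RHS](mulmx1 v); apply: (span_on_ext hv) => s x hD hK.
have /P_range hx := Kinc hK.
rewrite mulmx1 -{1}hx -mulmxA P_M (@P_ext n _ (fun s' => le s' s)) ?hx // => s'.
by split=> [[]//|h]; split=> //; exact: Dd h hD.
Qed.

Lemma P_later D m n : down_closed D -> (m <= n)%N -> P_ n D = P_ n D *m P_ m D.
Proof.
move=> Dd; elim: n => [|n IH]; first by rewrite leqn0 => /eqP ->; rewrite P_idem.
rewrite leq_eqVlt => /orP [/eqP ->|hm]; first by rewrite P_idem.
by rewrite P_succ // -mulmxA -IH // -P_succ.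
Qed.

(* Decreasing projections have nonincreasing ranks, hence stabilize. *)
Lemma P_stabilizes D : exists N, down_closed D -> forall n, (N <= n)%N -> P_ n D = P_ N D.
Proof.
have [Dd|nDd] := pselect (down_closed D); last by exists 0%N.
have hdec n : (\rank (P_ n.+1 D) <= \rank (P_ n D))%N.
  by rewrite P_succ //; apply: mxrankS; exact: submxMl.
have [N hN] := nonincreasing_stabilizes hdec.
exists N => _ n hn; have e1 := P_later Dd hn.
have sub : (P_ n D <= P_ N D)%MS by rewrite e1 submxMl.
have [_ eq1] := mxrank_leqif_sup sub.
have /submxP [X hX] : (P_ N D <= P_ n D)%MS by rewrite -eq1 hN.
have e2 : P_ N D *m P_ n D = P_ N D by rewrite {1}hX -mulmxA P_idem -hX.
by rewrite -[P_ N D]P_hermitian -e2 hadjM !P_hermitian -e1.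
Qed.

Definition stab_index D : nat := proj1_sig (cid (P_stabilizes D)).
Definition Plim D : 'M[C]_k := P_ (stab_index D) D.

Lemma Plim_eq D n : down_closed D -> (stab_index D <= n)%N -> P_ n D = Plim D.
Proof. by rewrite /Plim /stab_index; case: (cid (P_stabilizes D)) => N hN /= Dd; apply: hN. Qed.

Lemma Plim_range D (v : 'rV[C]_k) : down_closed D ->
  (forall n, v *m P_ n D = v) <-> v *m Plim D = v.
Proof.
move=> Dd; split=> [h|h n]; first exact: h.
have [hn|hn] := leqP (stab_index D) n; first by rewrite Plim_eq.
transitivity (v *m P_ (stab_index D) D *m P_ n D); first by rewrite -/(Plim D) h.
by rewrite -mulmxA -(P_later Dd (ltnW hn)) -/(Plim D) h.
Qed.

Lemma Plim_idem D : Plim D *m Plim D = Plim D.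
Proof. exact: P_idem. Qed.
Lemma Plim_hermitian D : hadj (Plim D) = Plim D.
Proof. exact: P_hermitian. Qed.

Lemma Plim_comm D D' : down_closed D -> down_closed D' -> comm_mx (Plim D) (Plim D').
Proof.
move=> Dd Dd'; set n := maxn (stab_index D) (stab_index D').
rewrite /comm_mx -(@Plim_eq D n) ?leq_maxl // -(@Plim_eq D' n) ?leq_maxr // !P_M.
by apply: P_ext => s; split=> -[].
Qed.

Definition below y (v : 'rV[C]_k) : Prop := forall n, v *m P_ n (fun s => le s y) = v.
Definition Pdown y : 'M[C]_k := Plim (fun s => le s y).

Lemma belowE y v : below y v <-> v *m Pdown y = v.
Proof. exact: (@Plim_range (fun s => le s y) v (@down_closed_le y)). Qed.

Lemma below_mono s t u : le s t -> below s u -> below t u.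
Proof.
move=> hst hu n; rewrite -(hu n) -mulmxA P_M; congr (_ *m _); apply: P_ext => s'.
by split=> [[]//|h]; split=> //; apply: le_trans h hst.
Qed.

Lemma Pdown_comm y y' : comm_mx (Pdown y) (Pdown y').
Proof. exact: Plim_comm (@down_closed_le y) (@down_closed_le y'). Qed.

Definition Klim x (v : 'rV[C]_k) : Prop :=
  below x v /\ forall y, ~ le x y -> forall u, below y u -> v *m hadj u = 0.

Lemma support_nonempty n (w : 'rV[C]_k) : w <> 0 ->
  exists s, w *m P_ n (fun s' => s' = s) <> 0.
Proof.
move=> hw; apply: contra_notP hw => hn.
rewrite -[w]mulmx1 -(P_all n); apply: P_pointwise0 => s _.
by apply: contra_notP hn => h; exists s.
Qed.

Lemma support_next n s (w : 'rV[C]_k) : w *m P_ n (fun s' => s' = s) <> 0 ->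
  exists t, le s t /\ w *m P_ n.+1 (fun s' => s' = t) <> 0.
Proof.
move=> hw; apply: contra_notP hw => hn.
have h0 : w *m P_ n.+1 (fun t => le s t) = 0.
  by apply: P_pointwise0 => t hst; apply: contra_notP hn => h; exists t.
have ew : w = w *m P_ n.+1 (fun t => ~ le s t).
  by rewrite -{1}[w]mulmx1 -(P_compl n.+1 (fun t => le s t)) mulmxDr h0 add0r.
have hu : span_on (K n.+1) (fun t => ~ le s t) w.
  by apply/P_range; rewrite {1}ew -mulmxA P_idem -ew.
rewrite -[RHS](mulmx0 _ w); apply: (span_on_ext hu) => t x ht hx.
rewrite mulmx0; apply: (@P_disjoint _ (fun s' => le s' t)).
  by apply/P_range; exact: Kinc.
by move=> s' h1 h2; apply: ht; rewrite -h2.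
Qed.

(* The key use of completeness: following the supports of a nonzero vector
   [w] along the stages yields a chain whose supremum [z] is below every [y]
   with [below y w], carries a component of [w], and lies in every
   Scott-closed set whose projections all fix [w]. *)
Lemma support_lub (w : 'rV[C]_k) : w <> 0 -> exists z,
  [/\ forall y, below y w -> le z y, w *m Pdown z <> 0 &
      forall D, scott_closed D -> (forall n, w *m P_ n D = w) -> D z].
Proof.
move=> hw.
have [c [hc1 hc2]] := @chain_choice S (fun n s => w *m P_ n (fun s' => s' = s) <> 0) le
  (support_nonempty 0 hw) (fun n s h => support_next h).
have [z [hz1 hz2]] := le_lub hc2.
have inD n D : w *m P_ n D = w -> D (c n).
  move=> hD; apply: contrapT => hn; apply: (hc1 n); apply: (P_disjoint hD).
  by move=> s h1 h2; apply: hn; rewrite -h2.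
exists z; split.
- by move=> y hy; apply: hz2 => n; apply: (inD n (fun s => le s y)).
- set N := stab_index (fun s => le s z).
  move=> h0; apply: (hc1 N).
  have -> : P_ N (fun s' => s' = c N) = P_ N (fun s => le s z) *m P_ N (fun s' => s' = c N).
    by rewrite P_M; apply: P_ext => s; split=> [->|[]//]; split.
  by rewrite mulmxA -/(Plim _) -/(Pdown z) h0 mul0mx.
- by move=> D [Dd Dsc] hD; apply: (Dsc c) => // n; exact: inD.
Qed.

Definition reducing (E : 'M[C]_k) : Prop :=
  [/\ E *m E = E, hadj E = E & forall y, comm_mx E (Pdown y)].

Lemma reducing_Pdown y : reducing (Pdown y).
Proof. by split; [exact: Plim_idem|exact: Plim_hermitian|exact: Pdown_comm]. Qed.

Lemma reducing_compl Q : reducing Q -> reducing (1%:M - Q).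
Proof.
move=> [hQI hQH hQy]; split.
- by rewrite mulmxBl mul1mx mulmxBr mulmx1 hQI subrr subr0.
- by rewrite hadjB hadj1 hQH.
- by move=> y; apply: comm_mx_sym; apply: comm_mxB; [exact: comm_mx1|apply: comm_mx_sym].
Qed.

Lemma reducing_cut E Q : reducing E -> reducing Q -> comm_mx E Q -> reducing (E *m Q).
Proof.
move=> [hI hH hC] [hQI hQH hQy] hEQ; split.
- by rewrite -mulmxA (mulmxA Q) -hEQ -mulmxA hQI mulmxA hI.
- by rewrite hadjM hQH hH hEQ.
- by move=> y; apply: comm_mx_sym; apply: comm_mxM; apply: comm_mx_sym.
Qed.

Definition Klim_sum D (E : 'M[C]_k) : Prop :=
  finsum (fun M => exists z, [/\ D z, forall v, Klim z (v *m M), M *m M = M & hadj M = M]) E.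

Lemma unsplit_in_Klim D E : scott_closed D -> reducing E -> E *m Plim D = E -> E <> 0 ->
  (forall y, E *m Pdown y = 0 \/ E *m Pdown y = E) ->
  exists2 z, D z & forall v, Klim z (v *m E).
Proof.
move=> hD [hI hH hC] hED hE0 hsplit.
have [i hi] : exists i, row i E <> 0.
  apply: contrapT => h; apply: hE0; apply/row_matrixP => i; rewrite row0.
  by apply: contrapT => h'; apply: h; exists i.
have hwE : row i E *m E = row i E by rewrite -row_mul hI.
have [z [hz1 hz2 hz3]] := support_lub hi.
have hEz : E *m Pdown z = E.
  case: (hsplit z) => // h; case: hz2; by rewrite -hwE -mulmxA h mulmx0.
exists z.
  apply: (hz3 D hD); apply/(Plim_range _ (proj1 hD)).
  by rewrite -hwE -mulmxA hED.
move=> v; split; first by apply/belowE; rewrite -mulmxA hEz.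
move=> y hzy u /belowE hu.
rewrite -hu hadjM Plim_hermitian !mulmxA -(mulmxA v) -/(Pdown y).
case: (hsplit y) => h; first by rewrite h mulmx0 mul0mx.
case: hzy; apply: hz1; apply/belowE.
by rewrite -hwE -mulmxA h.
Qed.

(* Every reducing projection below [Plim D], for Scott-closed [D], is a sum
   of projections into the limit fibres over [D]; by induction on its rank,
   splitting it by some [Pdown y] as long as possible. *)
Lemma Klim_decompose D E : scott_closed D -> reducing E -> E *m Plim D = E -> Klim_sum D E.
Proof.
move=> hD; move: {2}(\rank E) (leqnn (\rank E)) => r.
elim: r E => [|r IH] E hr hE hED.
  suff -> : E = 0 by exact: finsum0.
  by apply/eqP; rewrite -mxrank_eq0 -leqn0.
have [hI hH hC] := hE.
have cut Q : reducing Q -> comm_mx E Q -> comm_mx Q (Plim D) -> E *m Q <> E ->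
    Klim_sum D (E *m Q).
  move=> hQ hEQ hQD hne; have [hQI _ _] := hQ; apply: IH.
  - by rewrite -ltnS (leq_trans (rank_cut hI hQI hEQ hne)).
  - exact: reducing_cut.
  - by rewrite -mulmxA hQD mulmxA hED.
have [[y [hy0 hyE]]|nsplit] := pselect (exists y, E *m Pdown y <> 0 /\ E *m Pdown y <> E).
  have hyD : comm_mx (Pdown y) (Plim D) := Plim_comm (@down_closed_le y) (proj1 hD).
  rewrite -[E]mulmx1 -(subrK (Pdown y) 1%:M) mulmxDr addrC.
  apply: finsumD; first exact: cut (reducing_Pdown y) (hC y) hyD hyE.
  apply: cut; first exact: reducing_compl (reducing_Pdown y).
  - by apply: comm_mxB; [exact: comm_mx1|exact: hC].
  - by apply: comm_mx_sym; apply: comm_mxB; [exact: comm_mx1|apply: comm_mx_sym].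
  - rewrite mulmxBr mulmx1 => h; apply: hy0; apply: oppr_inj; apply: (addrI E).
    by rewrite h oppr0 addr0.
have [E0|hE0] := pselect (E = 0); first by rewrite E0; exact: finsum0.
have [z hz hEz] : exists2 z, D z & forall v, Klim z (v *m E).
  apply: unsplit_in_Klim => // y.
  have [h|h] := pselect (E *m Pdown y = 0); [by left|right].
  by apply: contrapT => h'; apply: nsplit; exists y.
by apply: finsum1; exists z.
Qed.

Lemma Klim_sub : fibre_subspaces Klim.
Proof.
move=> x; split.
  by split=> [n|y _ u _]; rewrite mul0mx.
move=> c u v [hu1 hu2] [hv1 hv2]; split.
  by move=> n; rewrite mulmxDl -scalemxAl hu1 hv1.
move=> y hy w hw.
by rewrite mulmxDl -scalemxAl (hu2 y hy w hw) (hv2 y hy w hw) scaler0 addr0.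
Qed.

Lemma Klim_orth : orthogonal_fibres Klim.
Proof.
move=> s s' a b ss' [ha1 ha2] [hb1 hb2].
have [h|h] := pselect (le s' s); last exact: (hb2 s h a ha1).
have h' : ~ le s s' by move=> h2; apply: ss'; apply: le_anti.
exact/orthoC/(ha2 s' h' b hb1).
Qed.

Lemma Klim_sum_span D E v : Klim_sum D E -> span_on Klim D (v *m E).
Proof.
move=> hE; apply: (finsum_ind (Q := fun E => span_on Klim D (v *m E))) hE.
- by rewrite mulmx0; exact: finsum0.
- by move=> M M' hM hM'; rewrite mulmxDr; exact: finsumD.
- by move=> M [z [hz hM _ _]]; apply: finsum1; exists z.
Qed.

Lemma Klim_span D (v : 'rV[C]_k) : scott_closed D ->
  (forall n, span_on (K n) D v) -> span_on Klim D v.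
Proof.
move=> hD hv.
have hvD : v *m Plim D = v by apply/(Plim_range _ (proj1 hD)) => n; apply/P_range.
rewrite -hvD; apply: Klim_sum_span; apply: (Klim_decompose hD _ (Plim_idem D)).
split; [exact: Plim_idem|exact: Plim_hermitian|].
by move=> y; apply: Plim_comm (proj1 hD) (@down_closed_le y).
Qed.

Lemma Klim_below t (v : 'rV[C]_k) : below t v <-> span_on Klim (fun s => le s t) v.
Proof.
split=> [h|h].
  by apply: Klim_span; [exact: scott_closed_le|move=> n; apply/P_range; apply: h].
apply: (finsum_ind (Q := below t)) h.
- by move=> n; rewrite mul0mx.
- by move=> x y hx hy n; rewrite mulmxDl hx hy.
- by move=> x [s [hs [hx _]]]; apply: below_mono hs hx.
Qed.

Lemma Klim_resolves : resolves_identity Klim.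
Proof.
have hE : reducing 1%:M by split; [exact: mulmx1|exact: hadj1|move=> y; exact: comm1mx].
have hE1 : 1%:M *m Plim (fun _ => True) = 1%:M by rewrite mul1mx /Plim P_all.
apply: finsum_flat; apply: finsum_mono (Klim_decompose scott_closed_all hE hE1).
move=> M [z [_ hz hMI hMH]].
rewrite -hMI -{1}hMH hadj_mul_rows; apply: finsum_big => i _; apply: finsum1.
by exists z, (row i M), (row i M); rewrite rowE.
Qed.

Lemma Klim_least (V : S -> 'rV[C]_k -> Prop) : decomposition V ->
  (forall t v, span_on V (fun s => le s t) v <-> below t v) ->
  forall x v, Klim x v -> V x v.
Proof.
move=> [Vsub Vorth /resolves_identityP [n [js [a [b [Va Vb Vres]]]]]] hV x v [hv1 hv2].
pose Q := proj_on js a b.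
have QI := proj_on_idem Vorth Va Vb Vres; have QH := proj_on_hermitian Vorth Va Vb Vres.
have QM := proj_onM Vorth Va Vb Vres; have QR := proj_on_range Vsub Vorth Va Vb Vres.
have hvx : v *m Q (fun s => le s x) = v by apply/QR/hV.
set strict := fun s => le s x /\ s <> x; set u := v *m Q strict.
have ev : v = v *m Q (fun s => s = x) + u.
  rewrite -{1}hvx -[Q _]mulmx1 -(proj_on_compl js Vres (fun s => s = x)).
  rewrite mulmxDr !QM mulmxDr /u /strict; congr (_ + _); congr (_ *m _).
  by apply: proj_on_ext => s; split=> [[]//|->]; split; [exact: le_refl|].
have hu : span_on V strict u by apply/QR; rewrite /u -mulmxA QI.
have huv : u *m hadj v = 0.
  rewrite -(mulmx0 _ u); apply: (span_on_ext hu) => s y [hsx nsx] hy.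
  have nxs : ~ le x s by move=> hxs; apply: nsx; apply: le_anti.
  have hy' : below s y by apply/hV; apply: finsum1; exists s.
  by rewrite mulmx0; apply/orthoC/(hv2 s nxs y hy').
have u0 : u = 0.
  apply: rv_norm0; rewrite -huv /u hadjM QH !mulmxA -(mulmxA v) QI.
  by congr (_ *m _); rewrite /strict; apply: proj_on_ext.
have hvx' : span_on V (fun s => s = x) v by apply/QR; rewrite {2}ev u0 addr0.
by apply: (subspace_finsum (Vsub x)); apply: finsum_mono hvx' => y [s [-> h]].
Qed.

End Limit.

Section DecompositionSup.
Variable C : numClosedFieldType.

Lemma resolutions_choice (S : Type) k (K : nat -> S -> 'rV[C]_k -> Prop) :
  (forall n, resolves_identity (K n)) ->
  exists (fn : nat -> nat) (fjs : forall n, 'I_(fn n) -> S)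
    (fa fb : forall n, 'I_(fn n) -> 'rV[C]_k),
  [/\ forall n i, K n (fjs n i) (fa n i), forall n i, K n (fjs n i) (fb n i) &
      forall n, \sum_i hadj (fa n i) *m fb n i = 1%:M].
Proof.
move=> h; pose g n := cid (resolves_identityP (h n)).
pose g2 n := cid (proj2_sig (g n)); pose g3 n := cid (proj2_sig (g2 n)).
pose g4 n := cid (proj2_sig (g3 n)).
exists (fun n => proj1_sig (g n)), (fun n => proj1_sig (g2 n)), (fun n => proj1_sig (g3 n)),
  (fun n => proj1_sig (g4 n)).
by split=> n; case: (proj2_sig (g4 n)).
Qed.

Theorem decomposition_sup (S : Type) (le : S -> S -> Prop) : omega_cpo le ->
  forall k (K : nat -> S -> 'rV[C]_k -> Prop), (forall n, decomposition (K n)) ->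
  (forall n t v, K n.+1 t v -> span_on (K n) (fun s => le s t) v) ->
  exists2 Ki : S -> 'rV[C]_k -> Prop, decomposition Ki &
  [/\ forall t v, span_on Ki (fun s => le s t) v <->
        forall n, span_on (K n) (fun s => le s t) v,
      forall D, scott_closed le D -> forall v,
        (forall n, span_on (K n) D v) -> span_on Ki D v &
      forall V, decomposition V ->
        (forall t v, span_on V (fun s => le s t) v <->
           forall n, span_on (K n) (fun s => le s t) v) ->
        forall x v, Ki x v -> V x v].
Proof.
move=> [Hpo Hlub] k K Kdec Kinc.
have Ksub n : fibre_subspaces (K n) by case: (Kdec n).
have Korth n : orthogonal_fibres (K n) by case: (Kdec n).
have Kid n : resolves_identity (K n) by case: (Kdec n).
have [fn [fjs [fa [fb [Ka Kb Kres]]]]] := resolutions_choice Kid.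
have belowE t v : below le fjs fa fb t v <-> forall n, span_on (K n) (fun s => le s t) v.
  by split=> h n; apply/(P_range Ksub Korth Ka Kb Kres); apply: h.
exists (Klim le fjs fa fb).
  split; [exact: Klim_sub|exact: (Klim_orth Hpo)|exact: (Klim_resolves Hpo Hlub)].
split.
- by move=> t v; rewrite -belowE (Klim_below Hpo Hlub Ksub Korth Ka Kb Kres Kinc).
- by move=> D hD v; apply: (Klim_span Hpo Hlub Ksub Korth Ka Kb Kres Kinc).
- move=> V hV hVK; apply: (Klim_least Hpo hV) => t v.
  by rewrite belowE; apply: hVK.
Qed.

Lemma span_sup_scott_closed (S : Type) (le : S -> S -> Prop) k
    (K : nat -> S -> 'rV[C]_k -> Prop) (Kinf : S -> 'rV[C]_k -> Prop) D :
  omega_cpo le -> (forall n, decomposition (K n)) -> decomposition Kinf ->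
  (forall n t v, K n.+1 t v -> span_on (K n) (fun s => le s t) v) ->
  (forall t v, span_on Kinf (fun s => le s t) v <->
     forall n, span_on (K n) (fun s => le s t) v) ->
  scott_closed le D -> forall v, span_on Kinf D v <-> forall n, span_on (K n) D v.
Proof.
move=> hcpo Kdec Kinfdec Kinc hKinf [Dd Dsc] v; split.
  move=> hv n; apply: finsum_flat; apply: finsum_mono hv => x [s [hs hx]].
  have /hKinf /(_ n) : span_on Kinf (fun s' => le s' s) x.
    by apply: finsum1; exists s; split=> //; case: hcpo => -[].
  by apply: span_on_mono => s' hs'; apply: Dd hs' hs.
move=> hv; have [Ki _ [_ hKiD hKimin]] := decomposition_sup hcpo Kdec Kinc.
apply: finsum_mono (hKiD D (conj Dd Dsc) v hv) => x [s [hs hx]].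
by exists s; split=> //; apply: hKimin hx.
Qed.

End DecompositionSup.

(* Classical relations [`r]: composition, adjoint and identity are computed
   pointwise, since all atoms are one-dimensional. *)
Section ClassicalRelations.
Variable C : numClosedFieldType.

Lemma one11_neq0 : (1%:M : 'M[C]_1) <> 0.
Proof. by move/matrixP/(_ 0 0); rewrite !mxE /= => /eqP; rewrite oner_eq0. Qed.

Lemma subspace11_full (V : 'M[C]_1 -> Prop) r : is_subspace V -> V r -> r <> 0 ->
  forall m, V m.
Proof.
move=> hV hr hr0 m.
have r00 : r 0 0 != 0.
  apply/eqP => h; apply: hr0; rewrite [r]mx11_scalar h.
  by apply/matrixP => i j; rewrite !mxE mul0rn.
have -> : m = (m 0 0 / r 0 0) *: r.
  by apply/matrixP => i j; rewrite (ord1 i) (ord1 j) !mxE divfK.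
exact: subspaceZ.
Qed.

Lemma crel_qrel (S T : Type) (r : S -> T -> Prop) : is_qrel (qcrel C r).
Proof.
move=> s t; split; first by right.
move=> a u v [hu|->] [hv|->]; [by left|by left|by left|].
by right; rewrite scaler0 addr0.
Qed.

Lemma qid_classicalE (S : Type) (s t : S) m :
  qid (qclassical C S) s t m <-> qcrel C (fun s t => s = t) s t m.
Proof.
split=> [[->|[e [c ->]]]|[e|->]]; [by right|by destruct e; left| |by left].
by destruct e; right; exists erefl, (m 0 0); exact: mx11_scalar.
Qed.

Lemma qadj_crelE (S T : Type) (r : S -> T -> Prop) t s m :
  qadj (qcrel C r) t s m <-> qcrel C (fun t s => r s t) t s m.
Proof.
rewrite /qadj /qcrel; split=> -[h|h]; [by left|right; exact: hadj_eq0|by left|].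
by right; rewrite h hadj0.
Qed.

Lemma qcomp_crelE (S T U : Type) (r1 : S -> T -> Prop) (r2 : T -> U -> Prop) s u m :
  qcomp (qcrel C r2) (qcrel C r1) s u m <->
  qcrel C (fun s u => exists2 t, r1 s t & r2 t u) s u m.
Proof.
rewrite qcompE; split.
  move=> hm; have [[t h1 h2]|hn] := pselect (exists2 t, r1 s t & r2 t u).
    by left; exists t.
  right; apply: finsum_eq0 hm => x [t [rr [ss [[h1|->] [[h2|->] ->]]]]];
    rewrite ?mulmx0 ?mul0mx //.
  by case: hn; exists t.
case=> [[t h1 h2]|->]; last exact: finsum0.
by apply: finsum1; exists t, 1%:M, m; rewrite mulmx1; split; [left|split; [left|]].
Qed.

Lemma crel_poset (S : Type) (le : S -> S -> Prop) : is_poset le -> qposet (qcrel C le).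
Proof.
move=> [hr [ht ha]]; split; first exact: crel_qrel.
split; first by move=> s t m /qid_classicalE [<-|->]; [left|right].
split.
  by move=> s u m /qcomp_crelE [[t h1 h2]|->]; [left; exact: ht h1 h2|right].
move=> s t m [h1 /qadj_crelE h2]; apply/qid_classicalE.
have [->|m0] := pselect (m = 0); [by right|left].
by case: h1 => // h1; case: h2 => // h2; apply: ha.
Qed.

Lemma graph_fun (S T : Type) (f : S -> T) : qfun (qcrel C (graph f)).
Proof.
split; first exact: crel_qrel.
split=> s s' m.
  move=> /(qcomp_congr (fun _ _ _ => iff_refl _) (@qadj_crelE _ _ _)).
  move=> /qcomp_crelE h; apply/qid_classicalE.
  by case: h => [[t <- <-]|->]; [left|right].
move=> /qid_classicalE h.
apply/(qcomp_congr (@qadj_crelE _ _ _) (fun _ _ _ => iff_refl _)); apply/qcomp_crelE.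
by case: h => [<-|->]; [left; exists (f s)|right].
Qed.

Lemma fun_graph (S T : Type) (F : qrel (qclassical C S) (qclassical C T)) :
  qfun F -> exists f : S -> T, forall s t m, F s t m <-> qcrel C (graph f) s t m.
Proof.
move=> [Fsub [h1 h2]].
have ex s : exists t (r : 'M[C]_1), F s t r /\ r <> 0.
  apply: contrapT => hn.
  have /h2 /qcompE hm : qid (qclassical C S) s s 1%:M by right; exists erefl, 1.
  apply: one11_neq0; apply: finsum_eq0 hm => x [j [rr [ss [hr [hs ->]]]]].
  have [->|rn] := pselect (rr = 0); first by rewrite mulmx0.
  by case: hn; exists j, rr.
pose f s := proj1_sig (cid (ex s)).
have hf s m : F s (f s) m.
  rewrite /f; case: (cid (ex s)) => t [r [hr hr0]] /=.
  exact: subspace11_full (Fsub s t) hr hr0 m.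
exists f => s t m; split; last by case=> [<-|->]; [exact: hf|case: (Fsub s t)].
move=> hm; have [->|m0] := pselect (m = 0); first by right.
left; apply: contrapT => ne; apply: m0.
have : qcomp F (qadj F) (f s) t m.
  apply/qcompE; apply: finsum1; exists s, 1%:M, m; split; last by rewrite mulmx1.
  by rewrite /qadj hadj1; exact: hf.
by move=> /h1 [//|[e _]].
Qed.

End ClassicalRelations.

Section ClassicalCpo.
Variable C : numClosedFieldType.

Lemma qcrel1 (S T : Type) (r : S -> T -> Prop) s t : qcrel C r s t 1%:M <-> r s t.
Proof. by split=> [[//|/one11_neq0]|]; [|left]. Qed.

Lemma qcomp_crel_graph (S T U : Type) (f : S -> T) (r : T -> U -> Prop) s u m :
  qcomp (qcrel C r) (qcrel C (graph f)) s u m <-> qcrel C r (f s) u m.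
Proof.
rewrite qcomp_crelE; split=> -[h|->]; [left|by right|left|by right].
  by case: h => t <-.
by exists (f s).
Qed.

Lemma incr_decompositions d (S : Type) (le : S -> S -> Prop)
    (K : nat -> qrel (qH C d) (qclassical C S)) :
  qincreasing (qcrel C le) K ->
  (forall n, decomposition (K n tt)) /\
  (forall n t v, K n.+1 tt t v -> span_on (K n tt) (fun s => le s t) v).
Proof.
move=> [hf hi]; have Kdec n : decomposition (K n tt) by apply/qfunE.
split=> // n t v hv; apply/qcomp_crel; last exact: hi.
by apply/qrel_fibres; case: (Kdec n).
Qed.

Lemma qsup_spanE d (S : Type) (le : S -> S -> Prop)
    (K : nat -> qrel (qH C d) (qclassical C S)) (Kinf : qrel (qH C d) (qclassical C S)) :
  (forall n, is_qrel (K n)) -> is_qrel Kinf ->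
  qeq (qcomp (qcrel C le) Kinf) (qmeet (fun n => qcomp (qcrel C le) (K n))) <->
  (forall t v, span_on (Kinf tt) (fun s => le s t) v <->
     forall n, span_on (K n tt) (fun s => le s t) v).
Proof.
move=> Kq Kinfq; split.
  move=> [h1 h2] t v; rewrite -qcomp_crel //; split=> [/h1 h n|h].
    by rewrite -qcomp_crel.
  by apply: h2 => n; rewrite qcomp_crel.
move=> h; split=> -[] t v; rewrite qcomp_crel // h => hv n; rewrite ?qcomp_crel //.
by have := hv n; rewrite qcomp_crel.
Qed.

Lemma qcpo_of_omega_cpo (S : Type) (le : S -> S -> Prop) : omega_cpo le -> qcpo (qcrel C le).
Proof.
move=> hcpo; split; first exact: crel_poset (proj1 hcpo).
move=> d _ K hinc; have [Kdec Kinc] := incr_decompositions hinc.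
have [Ki hKi [hspan _ _]] := decomposition_sup hcpo Kdec Kinc.
have Kq n : is_qrel (K n) by apply/qrel_fibres; case: (Kdec n).
exists (fun _ => Ki); split=> //; split; first exact/qfunE.
by apply/qsup_spanE => //; apply/qrel_fibres; case: hKi.
Qed.

Definition pt (S : Type) (x : S) : qrel (qH C 1) (qclassical C S) :=
  qcrel C (graph (fun _ : unit => x)).
Arguments pt {S} x _ _ _.

Lemma pt_incr (S : Type) (le : S -> S -> Prop) (s : nat -> S) :
  increasing_seq le s -> qincreasing (qcrel C le) (fun n => pt (s n)).
Proof.
move=> hs; split=> n; first exact: graph_fun.
move=> [] t m hm; apply/qcomp_crel_graph.
by case: hm => [<-|->]; [left|right].
Qed.

Lemma pt_sup (S : Type) (le : S -> S -> Prop) (s : nat -> S) x :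
  is_poset le -> increasing_seq le s -> is_lub le s x ->
  qsup (qcrel C le) (fun n => pt (s n)) (pt x).
Proof.
move=> [_ [ht _]] hs [hub hl]; split; first exact: pt_incr.
split; first exact: graph_fun.
split=> -[] t m.
  by move=> /qcomp_crel_graph [h|->] n; apply/qcomp_crel_graph; [left; apply: ht h|right].
move=> h; apply/qcomp_crel_graph; have [->|m0] := pselect (m = 0); [by right|left].
by apply: hl => n; have /qcomp_crel_graph [|] := h n.
Qed.

Lemma omega_cpo_of_qcpo (S : Type) (le : S -> S -> Prop) :
  is_poset le -> qcpo (qcrel C le) -> omega_cpo le.
Proof.
move=> hpo [_ hq]; split=> // s hs.
have [Ki [_ [hKf [hq1 hq2]]]] := hq 1%N isT (fun n => pt (s n)) (pt_incr hs).
have [g hg] := fun_graph hKf.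
have KiE t : qcomp (qcrel C le) Ki tt t 1%:M <-> le (g tt) t.
  by rewrite (qcomp_congr (fun _ _ _ => iff_refl _) hg) qcomp_crel_graph qcrel1.
have ptE n t : qcomp (qcrel C le) (pt (s n)) tt t 1%:M <-> le (s n) t.
  by rewrite qcomp_crel_graph qcrel1.
exists (g tt); split=> [n|y hy]; last by apply/KiE/hq2 => n; apply/ptE.
by apply/ptE/(hq1 tt); apply/KiE; case: hpo.
Qed.

End ClassicalCpo.
Arguments pt {C S} x _ _ _.

Section ClassicalFunctor.
Variable C : numClosedFieldType.

Definition pushforward (S T : Type) k (f : S -> T) (V : S -> 'rV[C]_k -> Prop) :
    T -> 'rV[C]_k -> Prop :=
  fun t => span_on V (fun s => f s = t).

Lemma span_on_pushforward (S T : Type) k (f : S -> T) (V : S -> 'rV[C]_k -> Prop) P v :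
  span_on (pushforward f V) P v <-> span_on V (fun s => P (f s)) v.
Proof.
split=> h.
  apply: finsum_flat; apply: finsum_mono h => w [t [ht hw]].
  by apply: span_on_mono hw => s ->.
apply: finsum_mono h => x [s [hs hx]]; exists (f s); split=> //.
by apply: finsum1; exists s.
Qed.

Lemma pushforward_decomposition (S T : Type) k (f : S -> T) (V : S -> 'rV[C]_k -> Prop) :
  decomposition V -> decomposition (pushforward f V).
Proof.
move=> [Vsub Vorth Vres]; split.
- move=> t; apply: finsum_subspace => c x [s [hs hx]].
  by exists s; split=> //; apply: subspaceZ.
- move=> t t' a b tt' ha hb.
  rewrite -(mulmx0 _ b); apply: (span_on_ext hb) => s' z hs' hz.
  rewrite mulmx0; apply/orthoC; rewrite -(mulmx0 _ a).
  apply: (span_on_ext ha) => s y hs hy; rewrite mulmx0.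
  by apply: (Vorth s' s) => // e; apply: tt'; rewrite -hs -hs' e.
- apply: finsum_mono Vres => X [s [a [b [ha [hb ->]]]]].
  by exists (f s), a, b; split; [|split=> //]; apply: finsum1; exists s.
Qed.

Lemma graph_compE d (S T : Type) (f : S -> T) (G : qrel (qH C d) (qclassical C S)) :
  is_qrel G -> qcomp (qcrel C (graph f)) G tt = pushforward f (G tt).
Proof.
move=> Gq; apply: functional_extensionality_dep => t; apply: funext => v; apply: propext.
exact: qcomp_crel.
Qed.

Lemma graph_comp_fun d (S T : Type) (f : S -> T) (G : qrel (qH C d) (qclassical C S)) :
  qfun G -> qfun (qcomp (qcrel C (graph f)) G).
Proof.
move=> /qfunE hG; apply/qfunE; rewrite graph_compE; first exact: pushforward_decomposition.
by apply/qrel_fibres; case: hG.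
Qed.

Lemma graph_comp_below d (S T : Type) (le : T -> T -> Prop) (f : S -> T)
    (G : qrel (qH C d) (qclassical C S)) u v :
  qfun G -> qcomp (qcrel C le) (qcomp (qcrel C (graph f)) G) tt u v <->
    span_on (G tt) (fun s => le (f s) u) v.
Proof.
move=> hG; have /qfunE [Gsub _ _] := hG; have /qrel_fibres Gq := Gsub.
rewrite qcomp_crel; last by case: (graph_comp_fun f hG).
by rewrite graph_compE // span_on_pushforward.
Qed.

Lemma graph_scott (S T : Type) (leS : S -> S -> Prop) (leT : T -> T -> Prop) (f : S -> T) :
  omega_cpo leS -> omega_cpo leT -> scott_continuous leS leT f ->
  qscott (qcrel C leS) (qcrel C leT) (qcrel C (graph f)).
Proof.
move=> hS [[_ [hTt _]] _] [fmon flub]; split; first exact: graph_fun.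
move=> d _ K Kinf [hinc [hKf hq]].
have [Kdec Kinc] := incr_decompositions hinc.
have Kq n : is_qrel (K n) by apply/qrel_fibres; case: (Kdec n).
have /qfunE Kinfdec := hKf; have Kinfq : is_qrel Kinf by apply/qrel_fibres; case: Kinfdec.
have Kfun n : qfun (K n) by apply/qfunE.
have scottD u : scott_closed leS (fun s => leT (f s) u).
  split=> [x y hxy hy|s x hs hx hsu]; first exact: hTt (fmon _ _ hxy) hy.
  by have [_ hl] := flub s x hs hx; apply: hl.
split.
  split=> [n|n]; first exact: graph_comp_fun.
  move=> [] t v; rewrite graph_comp_below // graph_compE // => hv.
  apply: finsum_flat; apply: finsum_mono hv => x [s [<- hx]].
  by apply: span_on_mono (Kinc n s x hx) => s' hs'; apply: fmon.
split; first exact: graph_comp_fun.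
have hsup D : scott_closed leS D ->
    forall v, span_on (Kinf tt) D v <-> forall n, span_on (K n tt) D v.
  move=> hD; apply: (span_sup_scott_closed hS Kdec Kinfdec Kinc _ hD).
  exact/(qsup_spanE leS Kq Kinfq).
split=> -[] u v; rewrite (graph_comp_below _ _ _ hKf).
  by move=> /(hsup _ (scottD u)) hv n; rewrite graph_comp_below.
by move=> h; apply/(hsup _ (scottD u)) => n; have := h n; rewrite graph_comp_below.
Qed.

Lemma graph_id (S : Type) : qeq (qcrel C (graph (fun x : S => x))) (qid (qclassical C S)).
Proof. by split=> s t m /qid_classicalE. Qed.

Lemma graph_comp (S T U : Type) (f : S -> T) (g : T -> U) :
  qeq (qcrel C (graph (fun x => g (f x)))) (qcomp (qcrel C (graph g)) (qcrel C (graph f))).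
Proof. by split=> s u m; rewrite qcomp_crel_graph. Qed.

Lemma graph_faithful (S T : Type) (f g : S -> T) :
  qeq (qcrel C (graph f)) (qcrel C (graph g)) -> f = g.
Proof.
move=> [h _]; apply: funext => s.
by have /h /qcrel1 : qcrel C (graph f) s (f s) 1%:M by left.
Qed.

Lemma graph_full (S T : Type) (leS : S -> S -> Prop) (leT : T -> T -> Prop)
    (F : qrel (qclassical C S) (qclassical C T)) :
  omega_cpo leS -> omega_cpo leT -> qscott (qcrel C leS) (qcrel C leT) F ->
  exists f : S -> T, scott_continuous leS leT f /\ qeq F (qcrel C (graph f)).
Proof.
move=> [hpoS _] [hpoT _] [hFf hsc].
have [f hf] := fun_graph hFf.
have Fpt x : forall i t m, qcomp F (pt x) i t m <-> pt (f x) i t m.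
  move=> i t m; rewrite (qcomp_congr hf (fun _ _ _ => iff_refl _)) qcomp_crel_graph.
  exact: iff_refl.
have FptE x u : qcomp (qcrel C leT) (qcomp F (pt x)) tt u 1%:M <-> leT (f x) u.
  by rewrite (qcomp_congr (fun _ _ _ => iff_refl _) (Fpt x)) qcomp_crel_graph qcrel1.
exists f; split; last by split=> s t m /hf.
have [hrS _] := hpoS.
have image_sup s x : increasing_seq leS s -> is_lub leS s x ->
    qsup (qcrel C leT) (fun n => qcomp F (pt (s n))) (qcomp F (pt x)).
  by move=> hs hl; apply: hsc => //; apply: pt_sup.
split.
  move=> x y hxy; pose s n := if n is 0 then x else y.
  have hs_le n : leS (s n) y by case: n.
  have hs : increasing_seq leS s by case.
  have [[_ hinc] _] := image_sup s y hs (conj hs_le (fun z hz => hz 1%N)).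
  by apply/(FptE x)/(hinc 0%N tt)/Fpt; left.
move=> s x hs hl; have [_ [_ [hq1 hq2]]] := image_sup s x hs hl.
split=> [n|y hy]; last by apply/(FptE x)/hq2 => n; apply/FptE/hy.
have /hq1 /(_ n) /FptE // : qcomp (qcrel C leT) (qcomp F (pt x)) tt (f x) 1%:M.
by apply/FptE; case: hpoT.
Qed.

End ClassicalFunctor.

Unset Implicit Arguments.

Theorem mainTheorem6 (C : numClosedFieldType) :
  (* (`S, `⊑) is a quantum cpo iff (S, ⊑) is an omega-cpo *)
  (forall (S : Type) (le : S -> S -> Prop), is_poset le ->
     (qcpo (qcrel C le) <-> omega_cpo le)) /\
  (* the functor `(-) : CPO -> qCPO is well defined ... *)
  (forall (S T : Type) (leS : S -> S -> Prop) (leT : T -> T -> Prop) (f : S -> T),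
     omega_cpo leS -> omega_cpo leT -> scott_continuous leS leT f ->
     qscott (qcrel C leS) (qcrel C leT) (qcrel C (graph f))) /\
  (forall (S : Type) (leS : S -> S -> Prop), omega_cpo leS ->
     qeq (qcrel C (graph (fun x : S => x))) (qid (qclassical C S))) /\
  (forall (S T U : Type) (leS : S -> S -> Prop) (leT : T -> T -> Prop)
     (leU : U -> U -> Prop) (f : S -> T) (g : T -> U),
     omega_cpo leS -> omega_cpo leT -> omega_cpo leU ->
     scott_continuous leS leT f -> scott_continuous leT leU g ->
     qeq (qcrel C (graph (fun x => g (f x))))
         (qcomp (qcrel C (graph g)) (qcrel C (graph f)))) /\
  (* ... faithful ... *)
  (forall (S T : Type) (leS : S -> S -> Prop) (leT : T -> T -> Prop) (f g : S -> T),
     omega_cpo leS -> omega_cpo leT ->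
     scott_continuous leS leT f -> scott_continuous leS leT g ->
     qeq (qcrel C (graph f)) (qcrel C (graph g)) -> f = g) /\
  (* ... and full *)
  (forall (S T : Type) (leS : S -> S -> Prop) (leT : T -> T -> Prop)
     (F : qrel (qclassical C S) (qclassical C T)),
     omega_cpo leS -> omega_cpo leT ->
     qscott (qcrel C leS) (qcrel C leT) F ->
     exists f : S -> T, scott_continuous leS leT f /\ qeq F (qcrel C (graph f))).
Proof.
split.
  by move=> S le hpo; split; [exact: omega_cpo_of_qcpo|exact: qcpo_of_omega_cpo].
split; first by move=> S T leS leT f hS hT hf; exact: graph_scott hS hT hf.
split; first by move=> S leS _; exact: graph_id.
split; first by move=> S T U leS leT leU f g _ _ _ _ _; exact: graph_comp.
split; first by move=> S T leS leT f g _ _ _ _; exact: graph_faithful.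
by move=> S T leS leT F hS hT hF; exact: graph_full hS hT hF.
Qed.
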